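(* Let $k\geq 2$, let $\mathbb Z_0=\mathbb Z\setminus\{0\}$, and let $z=\{z_j\}_{j\in\mathbb Z_0}$ be positive numbers such that $\sum_{j\in\mathbb Z_0}z_j$ converges with sum $A\neq\frac{1}{k-1}$. Then there exists a number $B>0$, $B\neq A$, satisfying $A(1+B)^k=B(1+A)^k$, which is the sum of a unique convergent series $\sum_{j\in\mathbb Z_0}\tilde z_j$ with $\tilde z\neq z$, and there is a unique sequence of positive parameters $\{\lambda_j\}_{j\in\mathbb Z_0}$, such that both $(z,\tilde z)$ and $(\tilde z,z)$ are solutions of the system $$u_i=\lambda_i\Bigl(\frac{1}{1+\sum_{j\in\mathbb Z_0}v_j}\Bigr)^{k},\qquad v_i=\lambda_i\Bigl(\frac{1}{1+\sum_{j\in\mathbb Z_0}u_j}\Bigr)^{k},\qquad i\in\mathbb Z_0,$$ in the unknowns $(u,v)$, where $\tilde z=\{\tilde z_j\}_{j\in\mathbb Z_0}$. *)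

From Stdlib Require Import Reals ZArith.
From Coquelicot Require Import Coquelicot.
Open Scope R_scope.

(* A sequence indexed by Z_0 = Z \ {0} is represented by u : Z -> R,
   whose value at 0 is irrelevant (never used). *)

Definition Z0_series (u : Z -> R) (s : R) : Prop :=
  exists s1 s2,
    is_series (fun n : nat => u (Z.of_nat (S n))) s1 /\
    is_series (fun n : nat => u (- Z.of_nat (S n))%Z) s2 /\
    s = s1 + s2.

Definition solves_system (k : nat) (lam u v : Z -> R) : Prop :=
  exists su sv,
    Z0_series u su /\ Z0_series v sv /\
    forall i : Z, i <> 0%Z ->
      u i = lam i * (1 / (1 + sv)) ^ k /\
      v i = lam i * (1 / (1 + su)) ^ k.

From Stdlib Require Import Reals ZArith Lra Lia.
From Coquelicot Require Import Coquelicot.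
Open Scope R_scope.

(* Write s = (1 + B) / (1 + A).  The equation A (1 + B)^k = B (1 + A)^k says
   B = A s^k, and together with 1 + B = (1 + A) s it makes s a root of
   A s^k - (1 + A) s + 1 = (s - 1) (A (s + ... + s^(k-1)) - 1).
   The second factor is -1 at 0 and grows to infinity, so it has a positive
   root, which differs from 1 exactly when A <> 1 / (k - 1).  Given B, the
   first half of the system forces lam_i = z_i (1 + B)^k and then
   zt_i = lam_i / (1 + A)^k = (B / A) z_i, which indeed solves both halves. *)

Lemma geom_sum_at_0 n : sum_f_R0 (fun i => 0 ^ i) n = 1.
Proof. induction n as [|n IH]; simpl; [lra | rewrite IH; lra]. Qed.

Lemma geom_sum_at_1 n : sum_f_R0 (fun i => 1 ^ i) n = INR (S n).
Proof.
  rewrite (sum_eq _ (fun _ => 1)) by (intros; apply pow1).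
  rewrite sum_cte; ring.
Qed.

Lemma geom_sum_ge s n : 0 <= s -> (1 <= n)%nat -> 1 + s <= sum_f_R0 (fun i => s ^ i) n.
Proof.
  intros Hs Hn; induction Hn as [|n _ IH]; simpl; [lra|].
  pose proof (pow_le s (S n) Hs) as Hpow; simpl in Hpow; lra.
Qed.

Lemma geom_sum_continuous n : continuity (fun s => sum_f_R0 (fun i => s ^ i) n).
Proof.
  induction n as [|n IH]; simpl.
  - apply continuity_const; intros ?; reflexivity.
  - apply continuity_plus; [exact IH | apply derivable_continuous, (derivable_pow (S n))].
Qed.

Lemma exists_geom_sum_root (A : R) (n : nat) :
  0 < A -> (1 <= n)%nat -> exists s, 0 < s /\ A * sum_f_R0 (fun i => s ^ i) n = 1 + A.
Proof.
  intros HA Hn.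
  set (psi := fun s => A * sum_f_R0 (fun i => s ^ i) n - (1 + A)).
  assert (Hcont : continuity psi).
  { apply continuity_minus.
    - apply continuity_scal, geom_sum_continuous.
    - apply continuity_const; intros ?; reflexivity. }
  assert (Hinv : 0 < / A) by (apply Rinv_0_lt_compat; exact HA).
  assert (Hneg : psi 0 < 0) by (unfold psi; rewrite geom_sum_at_0; lra).
  assert (Hpos : 0 < psi (/ A + 1)).
  { unfold psi.
    pose proof (geom_sum_ge (/ A + 1) n ltac:(lra) Hn) as Hge.
    assert (A * / A = 1) by (field; lra).
    nra. }
  destruct (IVT psi 0 (/ A + 1) Hcont ltac:(lra) Hneg Hpos) as [s [[Hs0 _] Hroot]].
  exists s; split.
  - destruct Hs0 as [Hs0 | <-]; [exact Hs0 | rewrite Hroot in Hneg; lra].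
  - unfold psi in Hroot; lra.
Qed.

Lemma geom_sum_root_pow (A s : R) (n : nat) :
  A * sum_f_R0 (fun i => s ^ i) n = 1 + A -> A * s ^ S n = (1 + A) * s - 1.
Proof.
  intros Hroot.
  pose proof (GP_finite s n) as Hgp; rewrite Nat.add_1_r in Hgp.
  replace (s ^ S n) with (sum_f_R0 (fun i => s ^ i) n * (s - 1) + 1) by lra.
  rewrite Rmult_plus_distr_l, <- Rmult_assoc, Hroot; ring.
Qed.

Lemma exists_companion_sum (k : nat) (A : R) :
  (2 <= k)%nat -> 0 < A -> A <> 1 / (INR k - 1) ->
  exists B, 0 < B /\ B <> A /\ A * (1 + B) ^ k = B * (1 + A) ^ k.
Proof.
  intros Hk HA HAk.
  destruct k as [|n]; [lia|].
  destruct (exists_geom_sum_root A n HA ltac:(lia)) as [s [Hs Hroot]].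
  pose proof (geom_sum_root_pow A s n Hroot) as HB.
  exists (A * s ^ S n); split; [|split].
  - apply Rmult_lt_0_compat; [exact HA | apply pow_lt, Hs].
  - intros HBA.
    assert (Hs1 : s = 1) by nra.
    subst s; rewrite geom_sum_at_1 in Hroot.
    apply HAk.
    assert (Hn : 2 <= INR (S n)) by (replace 2 with (INR 2) by (simpl; lra); apply le_INR; lia).
    field_simplify_eq; lra.
  - replace (1 + A * s ^ S n) with ((1 + A) * s) by lra.
    rewrite Rpow_mult_distr; ring.
Qed.

Lemma is_series_pos (a : nat -> R) l : (forall n, 0 < a n) -> is_series a l -> 0 < l.
Proof.
  intros Hpos Hl.
  assert (Hle : sum_n a 0 <= l).
  { apply (is_lim_seq_incr_compare _ _ Hl); intros n.
    rewrite sum_Sn; pose proof (Hpos (S n)); unfold plus; simpl; lra. }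
  rewrite sum_O in Hle; pose proof (Hpos 0%nat); lra.
Qed.

Lemma Z0_series_pos u s : (forall j, j <> 0%Z -> 0 < u j) -> Z0_series u s -> 0 < s.
Proof.
  intros Hpos [s1 [s2 [H1 [H2 ->]]]].
  apply Rplus_lt_0_compat;
    [apply (is_series_pos _ _ ) in H1 | apply (is_series_pos _ _ ) in H2];
    trivial; intros n; apply Hpos; lia.
Qed.

Lemma Z0_series_unique u a b : Z0_series u a -> Z0_series u b -> a = b.
Proof.
  intros [a1 [a2 [H1 [H2 ->]]]] [b1 [b2 [G1 [G2 ->]]]].
  apply is_series_unique in H1, H2, G1, G2; congruence.
Qed.

Lemma Z0_series_scal_r u s c : Z0_series u s -> Z0_series (fun j => u j * c) (s * c).
Proof.
  intros [s1 [s2 [H1 [H2 ->]]]].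
  exists (s1 * c), (s2 * c); split; [|split].
  - exact (is_series_scal_r c _ _ H1).
  - exact (is_series_scal_r c _ _ H2).
  - ring.
Qed.

Lemma solves_system_eqns k lam u v su sv :
  Z0_series u su -> Z0_series v sv -> solves_system k lam u v ->
  forall i, i <> 0%Z -> u i = lam i * (1 / (1 + sv)) ^ k /\ v i = lam i * (1 / (1 + su)) ^ k.
Proof.
  intros Hu Hv [su' [sv' [Hu' [Hv' Heqs]]]].
  rewrite (Z0_series_unique _ _ _ Hu Hu'), (Z0_series_unique _ _ _ Hv Hv').
  exact Heqs.
Qed.

Lemma pow_div_pow x y k : 0 < y -> x ^ k * (1 / y) ^ k = x ^ k / y ^ k.
Proof.
  intros Hy; rewrite Rdiv_1_l, pow_inv; field.
  apply pow_nonzero; lra.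
Qed.

Section Companion.

Variables (k : nat) (z : Z -> R) (A B : R).
Hypotheses (HzA : Z0_series z A) (HA : 0 < A) (HB : 0 < B)
  (HAB : A * (1 + B) ^ k = B * (1 + A) ^ k).

Let lam j := z j * (1 + B) ^ k.
Let zt j := z j * (B / A).

Lemma companion_series : Z0_series zt B.
Proof.
  pose proof (Z0_series_scal_r _ _ (B / A) HzA) as Hscal.
  replace (A * (B / A)) with B in Hscal by (field; lra).
  exact Hscal.
Qed.

Lemma companion_coeff_A : (1 + B) ^ k * (1 / (1 + A)) ^ k = B / A.
Proof.
  rewrite pow_div_pow by lra.
  assert ((1 + A) ^ k <> 0) by (apply pow_nonzero; lra).
  field_simplify_eq; [lra | split; lra].
Qed.

Lemma companion_coeff_B : (1 + B) ^ k * (1 / (1 + B)) ^ k = 1.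
Proof.
  rewrite pow_div_pow by lra.
  field; apply pow_nonzero; lra.
Qed.

Lemma companion_solves : solves_system k lam z zt /\ solves_system k lam zt z.
Proof.
  pose proof companion_series as Hzt.
  unfold lam, zt; split; [exists A, B | exists B, A];
    (split; [assumption | split; [assumption|]]); intros i _;
    rewrite !Rmult_assoc, ?companion_coeff_A, ?companion_coeff_B; split; ring.
Qed.

Lemma companion_unique zt' lam' :
  Z0_series zt' B -> solves_system k lam' z zt' ->
  forall j, j <> 0%Z -> zt' j = zt j /\ lam' j = lam j.
Proof.
  intros Hzt' Hsys j Hj.
  destruct (solves_system_eqns _ _ _ _ _ _ HzA Hzt' Hsys j Hj) as [Ez Ezt].
  assert (Hlam : lam' j = lam j).
  { unfold lam; rewrite Ez, Rmult_assoc, (Rmult_comm (_ ^ k)), companion_coeff_B; ring. }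
  split; [|exact Hlam].
  rewrite Ezt, Hlam; unfold lam, zt.
  rewrite Rmult_assoc, companion_coeff_A; reflexivity.
Qed.

End Companion.

Theorem mainTheorem5 (k : nat) (z : Z -> R) (A : R) :
  (2 <= k)%nat ->
  (forall j : Z, j <> 0%Z -> 0 < z j) ->
  Z0_series z A ->
  A <> 1 / (INR k - 1) ->
  exists B : R,
    0 < B /\ B <> A /\ A * (1 + B) ^ k = B * (1 + A) ^ k /\
    exists zt lam : Z -> R,
      ( Z0_series zt B /\
        (exists j : Z, j <> 0%Z /\ zt j <> z j) /\
        (forall j : Z, j <> 0%Z -> 0 < lam j) /\
        solves_system k lam z zt /\ solves_system k lam zt z ) /\
      (forall zt' lam' : Z -> R,
        Z0_series zt' B ->
        (exists j : Z, j <> 0%Z /\ zt' j <> z j) ->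
        (forall j : Z, j <> 0%Z -> 0 < lam' j) ->
        solves_system k lam' z zt' -> solves_system k lam' zt' z ->
        forall j : Z, j <> 0%Z -> zt' j = zt j /\ lam' j = lam j).
Proof.
  intros Hk Hz HzA HAk.
  pose proof (Z0_series_pos _ _ Hz HzA) as HA.
  destruct (exists_companion_sum k A Hk HA HAk) as [B [HB [HBA HAB]]].
  exists B; do 3 (split; [assumption|]).
  exists (fun j => z j * (B / A)), (fun j => z j * (1 + B) ^ k); split; [split; [|split; [|split]]|].
  - apply companion_series; assumption.
  - exists 1%Z; split; [lia|]; intros Hfix.
    pose proof (Hz 1%Z ltac:(lia)) as Hz1.
    assert (Hratio : B / A = 1) by (apply (Rmult_eq_reg_l (z 1%Z)); lra).
    apply HBA; replace B with (A * (B / A)) by (field; lra).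
    rewrite Hratio; ring.
  - intros j Hj; apply Rmult_lt_0_compat; [apply Hz, Hj | apply pow_lt; lra].
  - apply companion_solves; assumption.
  - intros zt' lam' Hzt' _ _ Hsys _.
    apply companion_unique; assumption.
Qed.
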